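(* Let $X$ be a topological quandle. (1) If $X$ has the discrete topology, then $H_n(X)=C_n(X)$ for all $n$ (i.e. all boundary maps vanish, so $H_n(X)\cong C_n(X)$). (2) If the quandle structure of $X$ is trivial (i.e. $x\triangleright y=x$ for all $x,y$), then $H_n(X)=C_n(X)$ for all $n$.
   Context: A quandle is a set with a binary operation $\triangleright$ such that $x\triangleright x=x$, each $\beta_y(x)=x\triangleright y$ is bijective, and $(x\triangleright y)\triangleright z=(x\triangleright z)\triangleright(y\triangleright z)$. A topological quandle is a topological space with a continuous quandle operation such that every $\beta_y$ is a homeomorphism. Let $\Delta^n$ have vertices $e_0,\dots,e_n$ ($\Delta^{n-1}$ has vertices $\bar e_0,\dots,\bar e_{n-1}$). For a singular $n$-simplex $\sigma:\Delta^n\to X$ write $\sigma=\sigma_{[x_1,\dots,x_{n+1}]}$ with $x_i=\sigma(e_{i-1})$; singular simplices are combined pointwise by $(\sigma\triangleright\tau)(t)=\sigma(t)\triangleright\tau(t)$. $C_n(X)$ is the free abelian group on singular $n$-simplices. For $2\le i\le n+1$, $d_i\sigma$ is $\sigma$ restricted to the face omitting $e_{i-1}$ (via $\bar e_j\mapsto e_j$ for $j\le i-2$, $\bar e_j\mapsto e_{j+1}$ for $j\ge i-1$), and $s_i\sigma=\sigma\circ\iota_i$ with $\iota_i(\sum t_j\bar e_j)=(\sum_{k=0}^{i-2}t_k)e_{i-1}+\sum_{j=i-1}^{n-1}t_je_{j+1}$. The boundary is $\partial_n\sigma=\sum_{i=2}^{n+1}(-1)^i(d_i\sigma-d_i\sigma\triangleright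 s_i\sigma)$, extended linearly ($\partial_0=0$); $H_n(X)$ is the $n$-th homology of $(C_*(X),\partial)$. *)

From mathcomp Require Import all_boot all_order all_algebra.
From mathcomp Require Import all_classical all_reals all_analysis.
From mathcomp Require Import Rstruct Rstruct_topology.

Set Implicit Arguments.
Unset Strict Implicit.
Unset Printing Implicit Defensive.

Import Order.TTheory GRing.Theory Num.Theory.
Local Open Scope classical_set_scope.
Local Open Scope ring_scope.

Notation RR := Rdefinitions.R.

Definition qbeta (X : Type) (op : X -> X -> X) (y : X) : X -> X :=
  fun x => op x y.

Definition is_quandle (X : Type) (op : X -> X -> X) : Prop :=
  [/\ (forall x, op x x = x),
      (forall y, bijective (qbeta op y)) &
      (forall x y z, op (op x y) z = op (op x z) (op y z))].

Definition is_topological_quandle (X : topologicalType) (op : X -> X -> X)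
  : Prop :=
  [/\ is_quandle op,
      continuous (fun p : X * X => op p.1 p.2) &
      (forall y, exists g : X -> X,
          [/\ cancel (qbeta op y) g, cancel g (qbeta op y),
              continuous (qbeta op y) & continuous g])].

Definition discrete_topology_on (X : topologicalType) : Prop :=
  forall A : set X, open A.

Definition trivial_quandle (X : Type) (op : X -> X -> X) : Prop :=
  forall x y, op x y = x.

(* Delta^n as a subset of R^(n+1) (row vectors); vertex e_j is the j-th
   standard basis vector, coordinates are barycentric. *)
Definition Delta (n : nat) : set 'rV[RR]_(n.+1) :=
  [set t | (forall j, 0 <= t ord0 j) /\ \sum_(j < n.+1) t ord0 j = 1].
Arguments Delta n : clear implicits.

(* A singular n-simplex is a map sigma : Delta^n -> X, continuous for the
   subspace topology; we represent it by a function on R^(n+1) of which only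
   the restriction to Delta^n matters. *)
Definition sing_fun (X : Type) (n : nat) := 'rV[RR]_(n.+1) -> X.

Definition is_singular (X : topologicalType) (n : nat) (s : sing_fun X n)
  : Prop := {within Delta n, continuous s}.

Definition same_simplex (X : Type) (n : nat) (s t : sing_fun X n) : Prop :=
  forall x, Delta n x -> s x = t x.

Definition sop (X : Type) (op : X -> X -> X) (n : nat)
  (s t : sing_fun X n) : sing_fun X n := fun x => op (s x) (t x).

(* For k = i-1 with 1 <= k <= n (here n = m.+1, so Delta^n has m+2 vertices):
   face_map k : Delta^m -> Delta^(m+1),  ebar_j |-> e_j (j < k),
                                          ebar_j |-> e_(j+1) (j >= k),
   i.e. the affine map omitting vertex e_k. *)
Definition face_map (m : nat) (k : nat) (t : 'rV[RR]_(m.+1)) : 'rV[RR]_(m.+2) :=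
  \row_(j < m.+2)
     (if (j < k)%N then t ord0 (inord j)
      else if j == k :> nat then 0 else t ord0 (inord j.-1)).

(* iota_i with k = i-1:
   iota(sum t_j ebar_j) = (sum_(l < k) t_l) e_k + sum_(j >= k) t_j e_(j+1). *)
Definition degen_map (m : nat) (k : nat) (t : 'rV[RR]_(m.+1)) : 'rV[RR]_(m.+2) :=
  \row_(j < m.+2)
     (if (j < k)%N then 0
      else if j == k :> nat then \sum_(l < m.+1 | (l < k)%N) t ord0 l
      else t ord0 (inord j.-1)).

(* d_i sigma and s_i sigma, with k = i-1 *)
Definition dface (X : Type) (m k : nat) (s : sing_fun X m.+1) : sing_fun X m :=
  fun t => s (face_map k t).
Definition sdegen (X : Type) (m k : nat) (s : sing_fun X m.+1) : sing_fun X m :=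
  fun t => s (degen_map k t).

(* A chain is a formal finite Z-linear combination of singular n-simplices,
   given as a list of (coefficient, simplex) pairs. *)
Definition chain (X : Type) (n : nat) := seq (int * sing_fun X n).

Definition valid_chain (X : topologicalType) (n : nat) (c : chain X n) : Prop :=
  forall p, List.In p c -> is_singular p.2.

Definition coeff (X : Type) (n : nat) (c : chain X n) (tau : sing_fun X n)
  : int :=
  \sum_(p <- c) (if `[< same_simplex p.2 tau >] then p.1 else 0).

(* equality in the free abelian group *)
Definition chain_eq (X : Type) (n : nat) (c d : chain X n) : Prop :=
  forall tau, coeff c tau = coeff d tau.

Definition chain_zero (X : Type) (n : nat) (c : chain X n) : Prop :=
  chain_eq c [::].

(* boundary of a singular (m+1)-simplex:
   sum_(i=2)^(m+2) (-1)^i (d_i sigma - d_i sigma |> s_i sigma), k = i-1 *)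
Definition bd_simplex (X : Type) (op : X -> X -> X) (m : nat)
  (s : sing_fun X m.+1) : chain X m :=
  flatten [seq [:: ((-1) ^+ k.+1, dface k s);
                   (- (-1) ^+ k.+1, sop op (dface k s) (sdegen k s))]
          | k <- iota 1 m.+1].

Definition bd (X : Type) (op : X -> X -> X) (m : nat) (c : chain X m.+1)
  : chain X m :=
  flatten [seq [seq (p.1 * q.1, q.2) | q <- bd_simplex op p.2] | p <- c].

(* cycles Z_n (partial_0 = 0) and boundaries B_n *)
Definition is_cycle (X : Type) (op : X -> X -> X) (n : nat) : chain X n -> Prop :=
  match n with
  | 0 => fun _ => True
  | m.+1 => fun c => chain_zero (bd op c)
  end.

Definition is_boundary (X : topologicalType) (op : X -> X -> X) (n : nat)
  (c : chain X n) : Prop :=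
  exists d : chain X n.+1, valid_chain d /\ chain_eq (bd op d) c.

(* H_n(X) = C_n(X): every n-chain is a cycle and the only boundary is 0,
   i.e. Z_n = C_n and B_n = 0. *)
Definition homology_equals_chains (X : topologicalType) (op : X -> X -> X)
  (n : nat) : Prop :=
  forall c : chain X n, valid_chain c ->
    is_cycle op c /\ (is_boundary op c -> chain_zero c).

From mathcomp Require Import all_boot all_order all_algebra.
From mathcomp Require Import all_classical all_reals all_analysis.
From mathcomp Require Import Rstruct Rstruct_topology.
From mathcomp Require Import ring.

Set Implicit Arguments.
Unset Strict Implicit.
Unset Printing Implicit Defensive.

Import Order.TTheory GRing.Theory Num.Theory.
Local Open Scope classical_set_scope.
Local Open Scope ring_scope.

(* Every term of the boundary of a singular simplex sigma has the form
   d_i sigma - d_i sigma |> s_i sigma, so all boundary maps vanish as soon as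
   d_i sigma |> s_i sigma = d_i sigma.  Delta^n is connected (it is the union of the segments joining
   e_0 to its points), so into a discrete space every singular simplex is
   constant; then d_i sigma and s_i sigma agree pointwise and idempotency
   x |> x = x applies. *)

Section StandardSimplex.
Variable n : nat.
Implicit Types x y : 'rV[RR]_n.+1.

Lemma Delta_segment x y l : Delta n x -> Delta n y -> 0 <= l <= 1 ->
  Delta n (x + l *: (y - x)).
Proof.
move=> [x0 x1] [y0 y1] /andP[l0 l1]; split=> [j|].
  rewrite !mxE.
  have -> : x ord0 j + l * (y ord0 j - x ord0 j) =
            (1 - l) * x ord0 j + l * y ord0 j by ring.
  by rewrite addr_ge0 // mulr_ge0 // subr_ge0.
under eq_bigr do rewrite !mxE.
by rewrite big_split /= -mulr_sumr sumrB x1 y1 subrr mulr0 addr0.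
Qed.

Lemma Delta_vertex0 : Delta n (delta_mx 0 0).
Proof.
split=> [j|]; first by rewrite mxE ler0n.
rewrite big_ord_recl mxE eqxx big1 ?addr0 // => j _.
by rewrite mxE eqxx andTb eq_sym (negbTE (neq_lift 0 j)) mulr0n.
Qed.

Lemma Delta_connected : connected (Delta n).
Proof.
pose e0 : 'rV[RR]_n.+1 := delta_mx 0 0.
pose seg y := (fun l : RR => e0 + l *: (y - e0)) @` `[0, 1].
have Dcup : Delta n = \bigcup_(y in Delta n) seg y.
  apply/seteqP; split=> [y Dy|z [y Dy [l]]].
    exists y => //; exists 1; last by rewrite scale1r addrC subrK.
    by rewrite set_itvcc /= lexx ler01.
  rewrite set_itvcc => l01 <-; exact: Delta_segment Delta_vertex0 Dy l01.
rewrite Dcup; apply: bigcup_connected => [|y _].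
  exists e0 => y _; exists 0; last by rewrite scale0r addr0.
  by rewrite set_itvcc /= lexx ler01.
apply: connected_continuous_connected; first exact: segment_connected.
apply: continuous_subspaceT => l.
by apply: cvgD; [exact: cvg_cst | apply: cvgZ; [exact: cvg_id | exact: cvg_cst]].
Qed.

End StandardSimplex.

Lemma face_map_lift m k (i : 'I_m.+1) (t : 'rV[RR]_m.+1) : (k <= m.+1)%N ->
  face_map k t ord0 (lift (inord k) i) = t ord0 i.
Proof.
move=> km; rewrite mxE /= /bump inordK ?ltnS //.
have [ki|ik] := leqP k i; last by rewrite add0n ik inord_val.
by rewrite add1n ltnNge (leqW ki) gtn_eqF ?ltnS //= inord_val.
Qed.

Lemma degen_map_lift m k (i : 'I_m.+1) (t : 'rV[RR]_m.+1) : (k <= m.+1)%N ->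
  degen_map k t ord0 (lift (inord k) i) = if (i < k)%N then 0 else t ord0 i.
Proof.
move=> km; rewrite mxE /= /bump inordK ?ltnS //.
have [ki|ik] := leqP k i; last by rewrite add0n ik.
by rewrite add1n ltnNge (leqW ki) gtn_eqF ?ltnS //= inord_val.
Qed.

Lemma face_map_Delta m k t : (k <= m.+1)%N -> Delta m t ->
  Delta m.+1 (face_map k t).
Proof.
move=> km [t0 t1]; split=> [j|].
  by rewrite mxE; case: ifP => // _; case: ifP.
rewrite (bigD1_ord (inord k)) //= mxE inordK ?ltnS // ltnn eqxx add0r -t1.
by apply: eq_bigr => i _; rewrite face_map_lift.
Qed.

Lemma degen_map_Delta m k t : (k <= m.+1)%N -> Delta m t ->
  Delta m.+1 (degen_map k t).
Proof.
move=> km [t0 t1]; split=> [j|].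
  by rewrite mxE; case: ifP => // _; case: ifP => _ //; apply: sumr_ge0.
rewrite (bigD1_ord (inord k)) //= mxE inordK ?ltnS // ltnn eqxx.
rewrite -t1 [RHS](bigID (fun l : 'I_m.+1 => (l < k)%N)) /=; congr (_ + _).
rewrite [RHS]big_mkcond /=; apply: eq_bigr => i _.
by rewrite degen_map_lift //; case: ifP.
Qed.

Lemma discrete_connected_eq (X : topologicalType) (A : set X) x y :
  discrete_topology_on X -> connected A -> A x -> A y -> x = y.
Proof.
move=> Xd cA Ax Ay.
have AxA : A `&` [set x] = A.
  apply: cA; first by exists x.
    by exists [set x]; first exact: Xd.
  exists [set x]; last by [].
  by rewrite -[[set x]]setCK; apply: open_closedC; exact: Xd.
by move: Ay; rewrite -AxA => -[].
Qed.

Lemma discrete_singular_const (X : topologicalType) n (s : sing_fun X n) x y :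
  discrete_topology_on X -> is_singular s -> Delta n x -> Delta n y ->
  s x = s y.
Proof.
move=> Xd sc Dx Dy.
have := connected_continuous_connected (@Delta_connected n) sc.
by move/(discrete_connected_eq Xd); apply; [exists x | exists y].
Qed.

Section Boundary.
Variables (X : topologicalType) (op : X -> X -> X).

Definition faces_fixed m (s : sing_fun X m.+1) : Prop :=
  forall k, (1 <= k <= m.+1)%N ->
    same_simplex (sop op (dface k s) (sdegen k s)) (dface k s).

Lemma coeff_bd m (c : chain X m.+1) tau :
  coeff (bd op c) tau = \sum_(p <- c) p.1 * coeff (bd_simplex op p.2) tau.
Proof.
rewrite /coeff /bd big_flatten big_map; apply: eq_bigr => p _.
rewrite big_map mulr_sumr; apply: eq_bigr => q _.
by case: asboolP; rewrite ?mulr0.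
Qed.

Lemma coeff_bd_simplex_faces_fixed m (s : sing_fun X m.+1) tau :
  faces_fixed s -> coeff (bd_simplex op s) tau = 0.
Proof.
move=> sfix; rewrite /coeff /bd_simplex big_flatten big_map.
apply: big1_seq => k; rewrite mem_iota add1n ltnS => /sfix kfix.
rewrite !big_cons big_nil /=.
case: asboolP => [dtau|ndtau]; case: asboolP => [otau|notau].
- by rewrite addr0 subrr.
- by case: notau => t Dt; rewrite kfix ?dtau.
- by case: ndtau => t Dt; rewrite -kfix ?otau.
- by rewrite !addr0.
Qed.

Lemma chain_zero_bd m (c : chain X m.+1) :
  (forall p, List.In p c -> faces_fixed p.2) -> chain_zero (bd op c).
Proof.
move=> cfix tau; rewrite coeff_bd [RHS]/coeff big_nil.
elim: c cfix => [|p c IH] cfix; first by rewrite big_nil.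
rewrite big_cons coeff_bd_simplex_faces_fixed ?mulr0 ?add0r.
  by apply: IH => q cq; apply: cfix; right.
by apply: cfix; left.
Qed.

Lemma homology_equals_chains_faces_fixed :
  (forall m (s : sing_fun X m.+1), is_singular s -> faces_fixed s) ->
  forall n, homology_equals_chains op n.
Proof.
move=> Xfix n c cvalid; split.
  by case: n c cvalid => // m c cvalid; apply: chain_zero_bd => p /cvalid/Xfix.
move=> [d [dvalid dc]] tau; rewrite -dc.
by apply: chain_zero_bd => p /dvalid/Xfix.
Qed.

Lemma trivial_quandle_faces_fixed m (s : sing_fun X m.+1) :
  trivial_quandle op -> faces_fixed s.
Proof. by move=> optriv k _ t _; rewrite /sop optriv. Qed.

Lemma discrete_faces_fixed m (s : sing_fun X m.+1) :
  (forall x, op x x = x) -> discrete_topology_on X -> is_singular s ->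
  faces_fixed s.
Proof.
move=> opxx Xd sc k /andP[_ km] t Dt; rewrite /sop /dface /sdegen.
have face_Dt := face_map_Delta km Dt.
rewrite (discrete_singular_const Xd sc (degen_map_Delta km Dt) face_Dt).
exact: opxx.
Qed.

End Boundary.

Theorem mainTheorem4 (X : topologicalType) (op : X -> X -> X) :
  is_topological_quandle op ->
  (discrete_topology_on X -> forall n : nat, homology_equals_chains op n) /\
  (trivial_quandle op -> forall n : nat, homology_equals_chains op n).
Proof.
move=> [[opxx _ _] _ _]; split=> [Xd|optriv];
  apply: homology_equals_chains_faces_fixed => m s sc.
- exact: discrete_faces_fixed.
- exact: trivial_quandle_faces_fixed.
Qed.
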